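(* Let $D=(V,A)$ be a digraph and $b\in\mathbb{Z}_{>0}^V$ such that $A$ can be partitioned into two $b$-branchings $B_1,B_2$. Let $b'_1,b'_2\in\mathbb{Z}_{\ge0}^V$ satisfy $b'_1+b'_2=d^-_A$, $b'_1\le b$ and $b'_2\le b$. Then $A$ can be partitioned into two $b$-branchings $B'_1,B'_2$ with $d^-_{B'_1}=b'_1$ and $d^-_{B'_2}=b'_2$ if and only if $b'_1(X)<b(X)$ and $b'_2(X)<b(X)$ for every source component $X$ of $D$.
   Context: $d^-_B\in\mathbb{Z}^V$ is the indegree vector of $(V,B)$; for a vector $c$ and $X\subseteq V$, $c(X)=\sum_{v\in X}c(v)$. An arc set $B\subseteq A$ is a $b$-branching if $d^-_B(v)\le b(v)$ for all $v\in V$ and $|B[X]|\le b(X)-1$ for every nonempty $X\subseteq V$, where $B[X]$ is the set of arcs of $B$ with both ends in $X$. A source component of $D$ is a strongly connected component $X$ of $D$ with no arc of $A$ entering $X$. *)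

From mathcomp Require Import all_boot.
Set Implicit Arguments. Unset Strict Implicit. Unset Printing Implicit Defensive.

(* A digraph D = (V, A): vertices form a finType V, arcs form a finType Arc
   (parallel arcs and loops allowed), with tail/head maps.  The arc set A
   is the whole of Arc. Arc subsets are {set Arc}. *)

Section Digraph.
Variables (V Arc : finType) (tail head : Arc -> V).

Definition indeg (B : {set Arc}) (v : V) : nat := #|[set a in B | head a == v]|.

Definition vsum (c : V -> nat) (X : {set V}) : nat := \sum_(v in X) c v.

Definition induced (B : {set Arc}) (X : {set V}) : {set Arc} :=
  [set a in B | (tail a \in X) && (head a \in X)].

Definition is_b_branching (b : V -> nat) (B : {set Arc}) : Prop :=
  (forall v, indeg B v <= b v) /\
  (forall X : {set V}, X != set0 -> #|induced B X| < vsum b X  (* i.e. |B[X]| <= b(X) - 1 over Z *)).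

Definition adj : rel V := fun u v => [exists a : Arc, (tail a == u) && (head a == v)].

Definition is_scc (X : {set V}) : Prop :=
  exists2 u, u \in X & X = [set v | connect adj u v && connect adj v u].

Definition is_source_component (X : {set V}) : Prop :=
  is_scc X /\ (forall a : Arc, head a \in X -> tail a \in X).

End Digraph.

From mathcomp Require Import all_boot.
From mathcomp Require Import zify.
Set Implicit Arguments. Unset Strict Implicit. Unset Printing Implicit Defensive.

(* A set B of arcs whose in-degree vector c satisfies c <= b is a b-branching
   as soon as every nonempty set X with c = b on X is entered by an arc of B,
   because sum_(v in X) c v = |B[X]| + (number of arcs of B entering X).  So it
   suffices to find disjoint arc sets F1, F2 with at most one arc per head, such
   that Fi enters every nonempty subset of Ti = {v | bi v = b v}; any B1 between
   F1 and the complement of F2 with in-degree b1 then works.  The partition into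
   two b-branchings shows that subsets of T1 :&: T2 are entered at least twice,
   and the source-component condition that the other subsets of T1 :|: T2 are
   entered at least once.  As in Edmonds' disjoint arborescence theorem, F1 is
   grown one arc at a time into the unreached part T of T1, keeping every
   nonempty X entered by [X \subset T2] + [X \subset T] of the remaining arcs;
   an arc preserving this enters a minimal tight set, found by uncrossing.  The
   remaining arcs then enter subsets of T2 once, and F2 is grown the same way. *)


Lemma set_card_between (T : finType) (A C : {set T}) k :
  A \subset C -> #|A| <= k <= #|C| ->
  exists B : {set T}, [/\ A \subset B, B \subset C & #|B| = k].
Proof.
move=> sAC /andP[leAk lekC].
have : k - #|A| <= #|C :\: A| by rewrite cardsD (setIidPr sAC) leq_sub2r.
case/card_geqP => s [uniq_s size_s sC]; exists (A :|: [set x in s]); split.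
- exact: subsetUl.
- rewrite subUset sAC; apply/subsetP => x; rewrite inE => /sC.
  by rewrite inE => /andP[].
have disjAs : A :&: [set x in s] = set0.
  apply/setP => x; rewrite !inE andbC; case xs: (x \in s) => //=.
  by have /setDP[_ /negPf] := sC x xs.
by rewrite cardsU disjAs cards0 subn0 cardsE (card_uniqP uniq_s) size_s subnKC.
Qed.

Section BranchingPartition.
Variables (V Arc : finType) (tail head : Arc -> V).

Implicit Types (E F B : {set Arc}) (T U X Y Z : {set V}) (a : Arc) (v : V).

Definition indeg_set E X : nat :=
  \sum_a ((a \in E) && (tail a \notin X) && (head a \in X)).

Definition inside T X : nat := X \subset T.

Definition covers E (p : {set V} -> nat) : Prop :=
  forall X, X != set0 -> p X <= indeg_set E X.

Lemma indeg_set_gt0 E X a :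
  a \in E -> tail a \notin X -> head a \in X -> 0 < indeg_set E X.
Proof. by move=> aE taX haX; rewrite /indeg_set (bigD1 a) //= aE taX haX. Qed.

Lemma indeg_setS E F X : E \subset F -> indeg_set E X <= indeg_set F X.
Proof.
move=> /subsetP sEF; apply: leq_sum => a _.
by case aE: (a \in E); rewrite ?(sEF _ aE).
Qed.

Lemma indeg_setT E : indeg_set E setT = 0.
Proof. by rewrite /indeg_set big1 // => a _; rewrite in_setT andbF. Qed.

Lemma indeg_set_submod E X Y :
  indeg_set E (X :|: Y) + indeg_set E (X :&: Y) <= indeg_set E X + indeg_set E Y.
Proof.
rewrite /indeg_set -!big_split /=; apply: leq_sum => a _; rewrite !inE.
by case: (a \in E); case: (tail a \in X); case: (tail a \in Y);
  case: (head a \in X); case: (head a \in Y).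
Qed.

Lemma indeg_setD1 E a X :
  indeg_set E X = indeg_set (E :\ a) X + ((a \in E) && (tail a \notin X) && (head a \in X)).
Proof.
rewrite /indeg_set (bigD1 a) //= addnC; congr (_ + _).
by rewrite [LHS]big_mkcond; apply: eq_bigr => c _; rewrite !inE; case: (c == a).
Qed.

Lemma indeg_setT_eq0 X :
  indeg_set setT X = 0 <-> (forall a, head a \in X -> tail a \in X).
Proof.
split=> [rho0 a haX | closedX].
  by apply: contraT => taX; move: (indeg_set_gt0 (in_setT a) taX haX); rewrite rho0.
rewrite /indeg_set big1 // => a _.
by case: (boolP (head a \in X)) => haX; rewrite ?andbF // (closedX _ haX) andbF.
Qed.

Lemma arc_into_subset E X Z : Z \subset X -> indeg_set E X < indeg_set E Z ->
  exists a, [/\ a \in E, tail a \in X :\: Z & head a \in Z].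
Proof.
move=> sZX; case: (boolP [exists a, [&& a \in E, tail a \in X :\: Z & head a \in Z]]).
  by case/existsP=> a /and3P[]; exists a.
move=> /existsPn noarc; rewrite ltnNge => /negP[]; apply: leq_sum => a _.
have := noarc a; rewrite !inE; case: (a \in E); case: (tail a \in Z);
  case: (tail a \in X); case hZ: (head a \in Z) => //=; by rewrite (subsetP sZX _ hZ).
Qed.

Lemma insideS T T' X : T \subset T' -> inside T X <= inside T' X.
Proof. by rewrite /inside => sTT'; case: (boolP (X \subset T)) => // /subset_trans->. Qed.

Lemma inside_anti T X Y : Y \subset X -> inside T X <= inside T Y.
Proof. by rewrite /inside => sYX; case: (boolP (X \subset T)) => // /(subset_trans sYX)->. Qed.

Lemma inside_supermod T X Y :
  inside T X + inside T Y <= inside T (X :|: Y) + inside T (X :&: Y).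
Proof.
rewrite /inside subUset.
case hX: (X \subset T); case hY: (Y \subset T) => //=.
- by rewrite (subset_trans (subsetIl X Y) hX).
- by rewrite (subset_trans (subsetIl X Y) hX).
- by rewrite (subset_trans (subsetIr X Y) hY).
Qed.

Section Growth.
Variable U : {set V}.

Lemma tight_uncross E T X Y : covers E (fun Z => inside U Z + inside T Z) ->
  indeg_set E X = inside U X -> indeg_set E Y = inside U Y -> X :&: Y != set0 ->
  ~~ (X :&: Y \subset T) /\ indeg_set E (X :&: Y) = inside U (X :&: Y).
Proof.
move=> cov tightX tightY XYn0.
have XUYn0 : X :|: Y != set0.
  by apply: contraNneq XYn0 => XY0; rewrite -subset0 -XY0 subIset ?subsetUl.
have h1 := cov _ XUYn0; have h2 := cov _ XYn0.
have h3 := indeg_set_submod E X Y; have h4 := inside_supermod U X Y.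
rewrite tightX tightY in h3.
have k0 : inside T (X :&: Y) = 0 by lia.
by split; [move: k0; rewrite /inside; case: (_ \subset _) | lia].
Qed.

Lemma covers_delD1 E T X a : covers E (fun Y => inside U Y + inside T Y) ->
  a \in E -> tail a \in X -> head a \in X :&: T ->
  indeg_set E X = inside U X ->
  (forall Y, Y \subset X -> ~~ (Y \subset T) -> head a \in Y ->
     indeg_set E Y = inside U Y -> tail a \in Y) ->
  covers (E :\ a) (fun Y => inside U Y + inside (T :\ head a) Y).
Proof.
move=> cov aE taX /setIP[haX haT] tightX minX Y Yn0.
have eD := indeg_setD1 E a Y; rewrite aE /= in eD.
case: (boolP ((tail a \notin Y) && (head a \in Y))) => [/andP[taY haY] | enters];
  rewrite ?taY ?haY /= in eD; last first.
  rewrite (negPf enters) addn0 in eD; rewrite -eD (leq_trans _ (cov Y Yn0)) //.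
  by rewrite leq_add2l insideS ?subD1set.
have -> : inside (T :\ head a) Y = 0.
  rewrite /inside; case: (boolP (Y \subset T :\ head a)) => // /subsetP/(_ _ haY).
  by rewrite !inE eqxx.
suff : inside U Y < indeg_set E Y by rewrite eD addn0 addn1 ltnS.
rewrite ltnNge; apply/negP => le_rho.
have covY := cov Y Yn0.
have YnT : ~~ (Y \subset T).
  by apply: contraTN le_rho => YT; rewrite -ltnNge (leq_trans _ covY) // /inside YT addn1.
have tightY : indeg_set E Y = inside U Y.
  by apply/eqP; rewrite eqn_leq le_rho (leq_trans _ covY) // leq_addr.
have XYn0 : X :&: Y != set0 by apply/set0Pn; exists (head a); rewrite inE haX.
have [XYnT tightXY] := tight_uncross cov tightX tightY XYn0.
have := minX _ (subsetIl X Y) XYnT; rewrite inE haX haY => /(_ isT tightXY).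
by rewrite inE (negPf taY) andbF.
Qed.

Lemma covers_grow_step E T : covers E (fun X => inside U X + inside T X) ->
  T != set0 ->
  exists a, [/\ a \in E, tail a \notin T, head a \in T &
    covers (E :\ a) (fun X => inside U X + inside (T :\ head a) X)].
Proof.
move=> cov Tn0.
have Vn0 : [set: V] != set0 by apply: contraNneq Tn0 => V0; rewrite -subset0 -V0 subsetT.
have := cov _ Vn0; rewrite indeg_setT leqn0 addn_eq0 /inside !eqb0 => /andP[VU VT].
pose P (X : {set V}) := [&& ~~ (X \subset T), X :&: T != set0 & indeg_set E X == inside U X].
have PT : P setT by rewrite /P VT setTI Tn0 indeg_setT /inside (negPf VU).
case: (minset_exists PT) => X /minsetP[PX minX] _.
case/and3P: PX => XnT XTn0 /eqP tightX.
have [|a [aE /setDP[taX taXT] haXT]] := arc_into_subset (E := E) (subsetIl X T).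
  rewrite tightX (leq_trans _ (cov _ XTn0)) // /inside subsetIr addn1 ltnS.
  exact: inside_anti (subsetIl X T).
have [haX haT] := setIP haXT.
exists a; split=> //; first by apply: contraNN taXT => taT; rewrite inE taX.
apply: (covers_delD1 cov aE taX haXT tightX) => Y sYX YnT haY tightY.
have PY : P Y by rewrite /P YnT tightY eqxx andbT; apply/set0Pn; exists (head a); rewrite inE haY.
by rewrite (minX _ PY sYX).
Qed.

Lemma covers_grow E T : covers E (fun X => inside U X + inside T X) ->
  exists F, [/\ F \subset E, {in F &, injective head}, {in F, forall a, head a \in T},
             covers F (inside T) & covers (E :\: F) (inside U)].
Proof.
move=> cov; have [n] := ubnP #|T|; elim: n => // n IH in E T cov *; rewrite ltnS => leTn.
case: (eqVneq T set0) cov => [-> | Tn0] cov.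
  exists set0; split; first exact: sub0set.
  - by move=> ? ?; rewrite inE.
  - by move=> ?; rewrite inE.
  - by move=> X Xn0; rewrite /inside subset0 (negPf Xn0).
  rewrite setD0 => X Xn0; have := cov X Xn0.
  by rewrite /= [inside set0 X]/inside subset0 (negPf Xn0) addn0.
have [a [aE taT haT cov']] := covers_grow_step cov Tn0.
have [|F [sFE injF hdF covF covR]] := IH _ _ cov'.
  by move: leTn; rewrite (cardsD1 (head a) T) haT add1n.
have hdFa : {in F, forall c, head c != head a}.
  by move=> c /hdF /setD1P[].
exists (a |: F); split.
- by rewrite subUset sub1set aE (subset_trans sFE) ?subD1set.
- move=> x y /setU1P[->|xF] /setU1P[->|yF] hxy //; last exact: injF.
  + by move: (hdFa _ yF); rewrite hxy eqxx.
  + by move: (hdFa _ xF); rewrite hxy eqxx.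
- by move=> c /setU1P[->|/hdF /setD1P[]].
- move=> X Xn0; rewrite /inside; case: (boolP (X \subset T)) => //= XT.
  case: (boolP (head a \in X)) => haX.
    by apply: (indeg_set_gt0 (setU11 a F)) => //; apply: contraNN taT => /(subsetP XT).
  have := covF _ Xn0; rewrite /inside subsetD1 XT haX => /leq_trans; apply.
  exact/indeg_setS/subsetUr.
- by rewrite -setDDl.
Qed.

End Growth.

Lemma covers_add_inside0 E p : covers E p -> covers E (fun X => inside set0 X + p X).
Proof. by move=> cov X Xn0; rewrite /inside subset0 (negPf Xn0); exact: cov. Qed.

Lemma indegE E v : indeg head E v = \sum_a ((a \in E) && (head a == v)).
Proof.
rewrite /indeg -sum1_card big_mkcond; apply: eq_bigr => a _.
by rewrite inE; case: (_ && _).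
Qed.

Lemma indeg_setC E v : indeg head setT v = indeg head E v + indeg head (~: E) v.
Proof.
rewrite !indegE -big_split; apply: eq_bigr => a _; rewrite !inE.
by case: (a \in E); case: (head a == v).
Qed.

Lemma sum_indeg E X :
  \sum_(v in X) indeg head E v = #|induced tail head E X| + indeg_set E X.
Proof.
under eq_bigr => v _ do rewrite indegE.
rewrite exchange_big -sum1_card [X in _ = X + _]big_mkcond /indeg_set -big_split.
apply: eq_bigr => a _ /=; rewrite inE; case: (a \in E) => /=; last by rewrite big1.
case: (boolP (head a \in X)) => haX; last first.
  rewrite big1 ?andbF // => v vX; apply/eqP; rewrite eqb0.
  by apply: contraNN haX => /eqP->.
rewrite (bigD1 (head a) haX) /= eqxx big1 => [|v /andP[_ hv]]; last by rewrite eq_sym (negPf hv).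
by rewrite !andbT; case: (tail a \in X).
Qed.

Lemma closed_connect X u x : (forall a, head a \in X -> tail a \in X) ->
  connect (adj tail head) u x -> x \in X -> u \in X.
Proof.
move=> closedX /connectP[p]; elim: p u => [|w p IHp] u /=; first by move=> _ ->.
move=> /andP[/existsP[a /andP[/eqP <- /eqP haw]] pw] ex xX.
by apply: closedX; rewrite haw (IHp w pw ex xX).
Qed.

Lemma closed_source_component X : X != set0 ->
  (forall a, head a \in X -> tail a \in X) ->
  exists2 Y, is_source_component tail head Y & Y \subset X.
Proof.
move=> /set0Pn[x0 x0X] closedX.
pose anc y := [set u | connect (adj tail head) u y].
case: (arg_minnP (fun y => #|anc y|) x0X) => x xX xmin.
exists [set v | connect (adj tail head) x v && connect (adj tail head) v x]; last first.
  by apply/subsetP => v; rewrite inE => /andP[_ vx]; exact: closed_connect vx xX.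
split; first by exists x; rewrite // inE connect0.
move=> a; rewrite !inE => /andP[xh hx].
have ta_x : connect (adj tail head) (tail a) x.
  by apply: connect_trans (connect1 _) hx; apply/existsP; exists a; rewrite !eqxx.
have sub_anc : anc (tail a) \subset anc x.
  by apply/subsetP => u; rewrite !inE => /connect_trans; apply.
have eq_anc : anc (tail a) = anc x.
  by apply/eqP; rewrite eqEcard sub_anc xmin //; exact: closed_connect ta_x xX.
have : x \in anc (tail a) by rewrite eq_anc inE connect0.
by rewrite inE => ->.
Qed.

Lemma source_component_vsum_lt b c B X : is_b_branching tail head b B ->
  (forall v, indeg head B v = c v) -> is_source_component tail head X ->
  vsum c X < vsum b X.
Proof.
move=> [_ brB] degB [[u uX _] closedX].
have rho0 : indeg_set B X = 0.
  by apply/eqP; rewrite -leqn0 -(proj2 (indeg_setT_eq0 X) closedX) indeg_setS ?subsetT.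
rewrite /vsum -(eq_bigr _ (fun v _ => degB v)) sum_indeg rho0 addn0.
by apply: brB; apply/set0Pn; exists u.
Qed.

Lemma eq_vsum c d X : X \subset [set v | c v == d v] -> vsum c X = vsum d X.
Proof. by move=> sX; apply: eq_bigr => v /(subsetP sX); rewrite inE => /eqP. Qed.

Lemma vsum_lt c d X v : (forall w, c w <= d w) ->
  v \in X -> c v < d v -> vsum c X < vsum d X.
Proof.
move=> le_cd vX lt_v; rewrite /vsum (bigD1 v) //= [X in _ < X](bigD1 v) //=.
by rewrite -addSn leq_add // leq_sum.
Qed.

Lemma branching_of_indeg b c B F : (forall v, indeg head B v = c v) ->
  (forall v, c v <= b v) -> F \subset B -> covers F (inside [set v | c v == b v]) ->
  is_b_branching tail head b B.
Proof.
move=> degB le_cb sFB covF; split=> [v | X Xn0]; first by rewrite degB.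
have := sum_indeg B X; rewrite (eq_bigr _ (fun v _ => degB v)) -/(vsum c X) => sumX.
case: (boolP (X \subset [set v | c v == b v])) => tightX.
  have := covF X Xn0; rewrite /inside tightX => /leq_trans/(_ (indeg_setS X sFB)).
  by rewrite -(eq_vsum tightX); lia.
case/subsetPn: tightX => v vX; rewrite inE => neq_v.
have lt_v : c v < b v by rewrite ltn_neqAle neq_v le_cb.
have := vsum_lt le_cb vX lt_v; lia.
Qed.

Lemma card_induced_partition b B1 B2 X :
  B1 :|: B2 = setT -> [disjoint B1 & B2] ->
  is_b_branching tail head b B1 -> is_b_branching tail head b B2 -> X != set0 ->
  #|induced tail head setT X| + 2 <= vsum b X + vsum b X.
Proof.
move=> cover disj [_ br1] [_ br2] Xn0.
have -> : induced tail head setT X = induced tail head B1 X :|: induced tail head B2 X.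
  by apply/setP => a; rewrite !inE -andb_orl -in_setU cover inE.
have sub_ind B : induced tail head B X \subset B.
  by apply/subsetP => a; rewrite inE => /andP[].
have disjI : [disjoint induced tail head B1 X & induced tail head B2 X].
  exact: disjointWl (sub_ind B1) (disjointWr (sub_ind B2) disj).
have [_] := leq_card_setU (induced tail head B1 X) (induced tail head B2 X).
rewrite disjI => /eqP->.
by have := br1 X Xn0; have := br2 X Xn0; lia.
Qed.

Lemma entered_of_slack_sources b c X :
  (forall Y, is_source_component tail head Y -> vsum c Y < vsum b Y) ->
  X != set0 -> X \subset [set v | c v == b v] -> 0 < indeg_set setT X.
Proof.
move=> slack Xn0 tightX; rewrite lt0n; apply/eqP => /indeg_setT_eq0 closedX.
have [Y srcY sYX] := closed_source_component Xn0 closedX.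
by have := slack Y srcY; rewrite (eq_vsum (subset_trans sYX tightX)) ltnn.
Qed.

Lemma covers_tight b b1 b2 :
  (exists B1 B2, [/\ B1 :|: B2 = setT, [disjoint B1 & B2],
      is_b_branching tail head b B1 & is_b_branching tail head b B2]) ->
  (forall v, b1 v + b2 v = indeg head setT v) ->
  (forall X, is_source_component tail head X ->
     vsum b1 X < vsum b X /\ vsum b2 X < vsum b X) ->
  covers setT (fun X => inside [set v | b2 v == b v] X + inside [set v | b1 v == b v] X).
Proof.
move=> [B1 [B2 [cover disj br1 br2]]] hsum slack X Xn0; rewrite /inside.
case: (boolP (X \subset [set v | b2 v == b v])) => tight2;
  case: (boolP (X \subset [set v | b1 v == b v])) => tight1 //=.
- have := sum_indeg setT X; rewrite -(eq_bigr _ (fun v _ => hsum v)) big_split /=.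
  rewrite -/(vsum b1 X) -/(vsum b2 X) (eq_vsum tight1) (eq_vsum tight2).
  by have := card_induced_partition cover disj br1 br2 Xn0; lia.
- by apply: (entered_of_slack_sources _ Xn0 tight2) => Y /slack[].
- by apply: (entered_of_slack_sources _ Xn0 tight1) => Y /slack[].
Qed.

Lemma indeg_injective_le c F : {in F &, injective head} ->
  {in F, forall a, 0 < c (head a)} -> forall v, indeg head F v <= c v.
Proof.
move=> injF pos v; case: (set_0Vmem [set a in F | head a == v]) => [e | [a]].
  by rewrite /indeg e cards0.
rewrite inE => /andP[aF /eqP <-]; apply: leq_trans (pos _ aF).
apply/card_le1_eqP => x y; rewrite !inE => /andP[xF /eqP hx] /andP[yF /eqP hy].
by apply: injF => //; rewrite hx hy.
Qed.

Lemma exists_indeg_between (c1 c2 : V -> nat) F1 F2 : [disjoint F1 & F2] ->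
  (forall v, indeg head F1 v <= c1 v) -> (forall v, indeg head F2 v <= c2 v) ->
  (forall v, c1 v + c2 v = indeg head setT v) ->
  exists B, [/\ F1 \subset B, [disjoint B & F2] & forall v, indeg head B v = c1 v].
Proof.
move=> disj le1 le2 hsum.
have pick v : exists Bv : {set Arc}, [/\ [set a in F1 | head a == v] \subset Bv,
    Bv \subset [set a | head a == v] :\: F2 & #|Bv| = c1 v].
  apply: set_card_between; rewrite ?le1 //=.
    by apply/subsetP => a; rewrite !inE => /andP[aF1 ->]; rewrite (disjointFr disj aF1).
  have -> : [set a | head a == v] :\: F2 = [set a in ~: F2 | head a == v].
    by apply/setP => a; rewrite !inE andbC.
  have := indeg_setC F2 v; rewrite -hsum; have := le2 v; rewrite /indeg; lia.
have [Bf hBf] := fin_all_exists pick.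
exists [set a | a \in Bf (head a)]; split.
- apply/subsetP => a aF1; rewrite inE; case: (hBf (head a)) => /subsetP sub _ _.
  by apply: sub; rewrite inE aF1 eqxx.
- rewrite disjoints_subset; apply/subsetP => a; rewrite !inE.
  by case: (hBf (head a)) => _ /subsetP sub _ /sub; rewrite !inE => /andP[].
- move=> v; case: (hBf v) => _ /subsetP sub <-; apply: eq_card => a; rewrite !inE.
  apply/andP/idP => [[aB /eqP <-] // | aB].
  by have := sub _ aB; rewrite !inE => /andP[_ /eqP hv]; rewrite hv aB.
Qed.
End BranchingPartition.

Theorem mainTheorem9 (V Arc : finType) (tail head : Arc -> V) (b : V -> nat)
  (hb : forall v, 0 < b v)
  (hpart : exists B1 B2 : {set Arc},
      [/\ B1 :|: B2 = [set: Arc], [disjoint B1 & B2],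
          is_b_branching tail head b B1 & is_b_branching tail head b B2])
  (b1 b2 : V -> nat)
  (hsum : forall v, b1 v + b2 v = indeg head [set: Arc] v)
  (hle1 : forall v, b1 v <= b v) (hle2 : forall v, b2 v <= b v) :
  (exists B1 B2 : {set Arc},
      [/\ B1 :|: B2 = [set: Arc], [disjoint B1 & B2],
          is_b_branching tail head b B1, is_b_branching tail head b B2 &
          (forall v, indeg head B1 v = b1 v) /\ (forall v, indeg head B2 v = b2 v)])
  <->
  (forall X : {set V}, is_source_component tail head X ->
      vsum b1 X < vsum b X /\ vsum b2 X < vsum b X).
Proof.
split=> [[B1 [B2 [_ _ br1 br2 [deg1 deg2]]]] X srcX | slack].
  by split; [exact: source_component_vsum_lt br1 deg1 srcX
            | exact: source_component_vsum_lt br2 deg2 srcX].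
have [F1 [_ inj1 hd1 cov1 covR]] := covers_grow (covers_tight hpart hsum slack).
have [F2 [sF2 inj2 hd2 cov2 _]] := covers_grow (covers_add_inside0 covR).
have disjF : [disjoint F1 & F2].
  by rewrite disjoint_sym disjoints_subset -setTD.
have pos1 : {in F1, forall a, 0 < b1 (head a)} by move=> a /hd1; rewrite inE => /eqP->; apply: hb.
have pos2 : {in F2, forall a, 0 < b2 (head a)} by move=> a /hd2; rewrite inE => /eqP->; apply: hb.
have [B [sF1B disjBF2 degB]] := exists_indeg_between disjF
  (indeg_injective_le inj1 pos1) (indeg_injective_le inj2 pos2) hsum.
have degC v : indeg head (~: B) v = b2 v.
  by apply/eqP; rewrite -(eqn_add2l (b1 v)) hsum (indeg_setC head B) degB.
exists B, (~: B); split.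
- exact: setUCr.
- by rewrite disjoints_subset setCK.
- exact: branching_of_indeg degB hle1 sF1B cov1.
- by apply: branching_of_indeg degC hle2 _ cov2; rewrite -disjoints_subset disjoint_sym.
- by [].
Qed.
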